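(* Let $L$ be a subsemifield of $\mathbb{R}_\mathrm{max}$ containing $\mathbb{Z}_\mathrm{max}$ which is finitely generated as a $\mathbb{Z}_\mathrm{max}$-semimodule. Then there exists a positive integer $n$ such that $L=(\frac{1}{n}\mathbb{Z})_\mathrm{max}$.
   Context: For a totally ordered abelian group $M$, $M_\mathrm{max}=M\cup\{-\infty\}$ is the idempotent semifield whose addition is $\max$ and whose multiplication is the group operation of $M$ (extended by $-\infty$ being absorbing). Thus $\mathbb{R}_\mathrm{max}$, $\mathbb{Z}_\mathrm{max}$ and $(\frac{1}{n}\mathbb{Z})_\mathrm{max}$ arise from the subgroups $\mathbb{R}\supseteq\frac1n\mathbb{Z}\supseteq\mathbb{Z}$, and $\mathbb{Z}_\mathrm{max}\subseteq(\frac1n\mathbb{Z})_\mathrm{max}\subseteq\mathbb{R}_\mathrm{max}$. *)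

From Stdlib Require Import Reals List.
Open Scope R_scope.

(* The idempotent semifield R_max = R ∪ {-oo}; None encodes -oo. *)
Definition RmaxT := option R.

Definition tadd (a b : RmaxT) : RmaxT :=
  match a, b with
  | None, _ => b
  | _, None => a
  | Some x, Some y => Some (Rmax x y)
  end.

Definition tmul (a b : RmaxT) : RmaxT :=
  match a, b with
  | Some x, Some y => Some (x + y)
  | _, _ => None
  end.

Definition tinv (a : RmaxT) : RmaxT :=
  match a with Some x => Some (- x) | None => None end.

Definition is_subsemifield (L : RmaxT -> Prop) : Prop :=
  L None /\ L (Some 0) /\
  (forall a b, L a -> L b -> L (tadd a b)) /\
  (forall a b, L a -> L b -> L (tmul a b)) /\
  (forall x, L (Some x) -> L (tinv (Some x))).

Definition Zmax (a : RmaxT) : Prop := a = None \/ exists k : Z, a = Some (IZR k).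

Definition fracZmax (n : nat) (a : RmaxT) : Prop :=
  a = None \/ exists k : Z, a = Some (IZR k / INR n).

Definition tlincomb (cs gs : list RmaxT) : RmaxT :=
  fold_right tadd None (map (fun p => tmul (fst p) (snd p)) (combine cs gs)).

Definition fin_gen_Zmax_semimodule (L : RmaxT -> Prop) : Prop :=
  exists gs : list RmaxT, Forall L gs /\
    forall x, L x -> exists cs : list RmaxT,
      length cs = length gs /\ Forall Zmax cs /\ x = tlincomb cs gs.

From Stdlib Require Import Reals List ZArith Lra Lia Classical.
Open Scope R_scope.

(* The finite part G = {x | Some x ∈ L} is an additive subgroup of R containing
   Z.  A tropical Z_max-combination is a maximum, so it equals a single term
   k + g with g a generator; hence G ∩ [0,1) consists of fractional parts of
   generators and is finite.  Therefore G has a least positive element a, which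
   generates G like in the Euclidean algorithm; as 1 ∈ G, a = 1/n for some
   positive integer n, and G = (1/n)Z. *)

Lemma fold_right_tadd_In (l : list RmaxT) (v : R) :
  fold_right tadd None l = Some v -> In (Some v) l.
Proof.
  induction l as [|h t IH]; simpl; [discriminate|].
  destruct h as [x|], (fold_right tadd None t) as [y|]; simpl; intro H;
    try (inversion H; subst; auto; fail).
  unfold Rmax in H; destruct (Rle_dec x y); inversion H; subst; auto.
Qed.

Lemma tlincomb_Zmax_Some (cs gs : list RmaxT) (v : R) :
  Forall Zmax cs -> tlincomb cs gs = Some v ->
  exists (k : Z) (g : R), In (Some g) gs /\ v = IZR k + g.
Proof.
  intros HZ H. apply fold_right_tadd_In, in_map_iff in H.
  destruct H as [[c g] [Hcg Hin]]; simpl in Hcg.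
  rewrite Forall_forall in HZ.
  destruct (HZ _ (in_combine_l _ _ _ _ Hin)) as [->|[k ->]]; [discriminate|].
  destruct g as [g|]; [|discriminate]. inversion Hcg.
  exists k, g. split; [exact (in_combine_r _ _ _ _ Hin) | reflexivity].
Qed.

Lemma finite_has_min (l : list R) (P : R -> Prop) :
  (forall x, P x -> In x l) -> (exists x, P x) ->
  exists m, P m /\ forall y, P y -> m <= y.
Proof.
  revert P; induction l as [|h t IH]; intros P HP [x Px].
  - destruct (HP _ Px).
  - destruct (classic (exists x, P x /\ x < h)) as [Hlt|Hnlt].
    + destruct (IH (fun x => P x /\ x < h)) as [m [[Pm Hmh] Hmin]]; auto.
      { intros y [Py Hyh]. destruct (HP _ Py); auto. subst; lra. }
      exists m; split; auto. intros y Py.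
      destruct (Rlt_or_le y h); [apply Hmin; auto | lra].
    + destruct (classic (P h)) as [Ph|nPh].
      * exists h; split; auto. intros y Py.
        destruct (Rlt_or_le y h); auto. exfalso; eauto.
      * apply IH; eauto. intros y Py.
        destruct (HP _ Py); auto. subst; contradiction.
Qed.

Lemma unit_interval_in_frac_parts (G : R -> Prop) (gs : list R) :
  (forall x, G x -> exists (k : Z) (g : R), In g gs /\ x = IZR k + g) ->
  forall x, G x -> 0 <= x < 1 -> In x (map frac_part gs).
Proof.
  intros Hgen x Gx Hx. destruct (Hgen x Gx) as [k [g [Hg ->]]].
  apply in_map_iff. exists g. split; auto.
  symmetry. apply (Int_part_frac_part_spec g (- k)); auto.
  rewrite opp_IZR. ring.
Qed.

Lemma has_least_positive_of_finite_mod_Z (G : R -> Prop) (gs : list R) :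
  (forall k : Z, G (IZR k)) ->
  (forall x, G x -> exists (k : Z) (g : R), In g gs /\ x = IZR k + g) ->
  exists a, G a /\ 0 < a /\ forall x, G x -> 0 < x -> a <= x.
Proof.
  intros G_IZR Hgen.
  destruct (finite_has_min (1 :: map frac_part gs) (fun x => G x /\ 0 < x <= 1))
    as [a [[Ga Ha] Hmin]].
  - intros x [Gx Hx]. destruct (Req_dec x 1) as [->|]; [left; reflexivity|].
    right. apply (unit_interval_in_frac_parts G); auto; lra.
  - exists 1. split; [apply G_IZR | lra].
  - exists a. repeat split; try tauto. intros x Gx Hx.
    destruct (Rle_or_lt x 1); [apply Hmin; auto | lra].
Qed.

Section AdditiveSubgroup.

Variable G : R -> Prop.
Hypothesis G_add : forall x y, G x -> G y -> G (x + y).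
Hypothesis G_opp : forall x, G x -> G (- x).
Hypothesis G_IZR : forall k : Z, G (IZR k).

Lemma subgroup_IZR_mult (a : R) (z : Z) : G a -> G (IZR z * a).
Proof.
  intro Ga.
  assert (G_INR : forall n, G (INR n * a)).
  { induction n as [|n IH].
    - replace (INR 0 * a) with (IZR 0) by (simpl; ring). apply G_IZR.
    - rewrite S_INR. replace ((INR n + 1) * a) with (INR n * a + a) by ring.
      auto. }
  destruct (Z.le_gt_cases 0 z).
  - rewrite <- (Z2Nat.id z), <- INR_IZR_INZ by lia. apply G_INR.
  - replace z with (- Z.of_nat (Z.to_nat (- z)))%Z by lia.
    rewrite opp_IZR, <- INR_IZR_INZ.
    replace (- INR (Z.to_nat (- z)) * a) with (- (INR (Z.to_nat (- z)) * a))
      by ring.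
    auto.
Qed.

Lemma least_positive_generates (a : R) :
  G a -> 0 < a -> (forall x, G x -> 0 < x -> a <= x) ->
  forall x, G x -> x = IZR (Int_part (x / a)) * a.
Proof.
  intros Ga Ha Hmin x Gx. set (q := Int_part (x / a)).
  destruct (base_Int_part (x / a)) as [Hq1 Hq2]; fold q in Hq1, Hq2.
  assert (Gr : G (x - IZR q * a)).
  { apply G_add; auto. apply G_opp, subgroup_IZR_mult, Ga. }
  assert (Hr0 : 0 <= x - IZR q * a).
  { apply (Rmult_le_compat_r a) in Hq1; [|lra].
    unfold Rdiv in Hq1. rewrite Rmult_assoc, Rinv_l in Hq1; lra. }
  assert (Hra : x - IZR q * a < a).
  { assert (Hlt : x / a - IZR q < 1) by lra.
    apply (Rmult_lt_compat_r a) in Hlt; [|lra].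
    unfold Rdiv in Hlt. rewrite Rmult_minus_distr_r, Rmult_assoc, Rinv_l in Hlt;
      lra. }
  destruct (Req_dec (x - IZR q * a) 0); [lra|].
  assert (a <= x - IZR q * a) by (apply Hmin; auto; lra). lra.
Qed.

Lemma subgroup_eq_fracZ (a : R) :
  G a -> 0 < a -> (forall x, G x -> 0 < x -> a <= x) ->
  exists n : nat, (0 < n)%nat /\
    forall x, G x <-> exists q : Z, x = IZR q / INR n.
Proof.
  intros Ga Ha Hmin.
  pose proof (least_positive_generates a Ga Ha Hmin 1 (G_IZR 1)) as H1.
  set (k := Int_part (1 / a)) in H1.
  assert (Hk : (0 < k)%Z).
  { apply lt_0_IZR. destruct (Rle_or_lt (IZR k) 0); auto. nra. }
  assert (Ek : INR (Z.to_nat k) = IZR k).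
  { rewrite INR_IZR_INZ, Z2Nat.id; [reflexivity | lia]. }
  assert (Ea : a = 1 / IZR k).
  { assert (IZR k <> 0) by (apply not_0_IZR; lia). field_simplify_eq; lra. }
  exists (Z.to_nat k). split; [lia|]. rewrite Ek. intro x. split.
  - intro Gx. exists (Int_part (x / a)).
    rewrite (least_positive_generates a Ga Ha Hmin x Gx) at 1.
    rewrite Ea. unfold Rdiv. ring.
  - intros [q ->]. replace (IZR q / IZR k) with (IZR q * a)
      by (rewrite Ea; unfold Rdiv; ring).
    apply subgroup_IZR_mult, Ga.
Qed.

End AdditiveSubgroup.

Theorem mainTheorem8 (L : RmaxT -> Prop) :
  is_subsemifield L ->
  (forall a, Zmax a -> L a) ->
  fin_gen_Zmax_semimodule L ->
  exists n : nat, (0 < n)%nat /\ (forall a, L a <-> fracZmax n a).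
Proof.
  intros [L_None [_ [_ [L_mul L_inv]]]] L_Zmax [gs [_ Hgen]].
  set (G := fun x => L (Some x)).
  assert (G_IZR : forall k, G (IZR k)) by (intro k; apply L_Zmax; right; eauto).
  set (finite_gens := map (fun o => match o with Some g => g | None => 0 end) gs).
  assert (G_gen : forall x, G x ->
            exists (k : Z) (g : R), In g finite_gens /\ x = IZR k + g).
  { intros x Gx. destruct (Hgen _ Gx) as [cs [_ [HZ Hx]]].
    destruct (tlincomb_Zmax_Some cs gs x HZ (eq_sym Hx)) as [k [g [Hg ->]]].
    exists k, g. split; auto. exact (in_map _ _ _ Hg). }
  assert (G_add : forall x y, G x -> G y -> G (x + y)) by (intros x y; apply L_mul).
  assert (G_opp : forall x, G x -> G (- x)) by (intro x; apply L_inv).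
  destruct (has_least_positive_of_finite_mod_Z G finite_gens G_IZR G_gen)
    as [a [Ga [Ha Hmin]]].
  destruct (subgroup_eq_fracZ G G_add G_opp G_IZR a Ga Ha Hmin) as [n [Hn HG]].
  exists n. split; [exact Hn|]. intros [x|]; unfold fracZmax.
  - change (G x <-> Some x = None \/ exists k, Some x = Some (IZR k / INR n)).
    rewrite (HG x). split.
    + intros [q ->]. right. eauto.
    + intros [|[q Hq]]; [discriminate | inversion Hq; eauto].
  - split; auto.
Qed.
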